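(* For positive real numbers $u_1,u_2,u_3,w_1,w_2,w_3$ define $$\mathsf K(u,w)=\frac{(u_1+w_1)(u_2+w_2)(u_3+w_3)+\max\{u_1u_2u_3,\,w_1w_2w_3\}}{\sqrt{(u_2u_3+w_2w_3+u_2w_3)(u_3u_1+w_3w_1+u_3w_1)(u_1u_2+w_1w_2+u_1w_2)}}.$$ Then $\mathsf K(u,w)\ge\sqrt3$ for all such arguments, with equality when $u_1=w_1$, $u_2=w_2$, $u_3=w_3$; moreover $\mathsf K$ is unbounded above on this domain.
   Context: Equivalently, with $\rho_i=u_i/w_i>0$, $\mathsf K^2=\dfrac{\big[(1+\rho_1)(1+\rho_2)(1+\rho_3)+\max\{1,\rho_1\rho_2\rho_3\}\big]^2}{(1+\rho_2\rho_3+\rho_2)(1+\rho_3\rho_1+\rho_3)(1+\rho_1\rho_2+\rho_1)}$ and the claim is $\mathsf K^2\ge3$. *)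

From Stdlib Require Import Reals.
Open Scope R_scope.

Definition Kfun (u1 u2 u3 w1 w2 w3 : R) : R :=
  ((u1 + w1) * (u2 + w2) * (u3 + w3) + Rmax (u1 * u2 * u3) (w1 * w2 * w3))
  / sqrt ((u2 * u3 + w2 * w3 + u2 * w3)
          * (u3 * u1 + w3 * w1 + u3 * w1)
          * (u1 * u2 + w1 * w2 + u1 * w2)).

(** Each factor pair [(u_i, w_i)] may be rescaled by a common positive
    factor without changing [Kfun], so it suffices to treat [w = (1,1,1)]
    and ratios [a, b, c].  Writing [P = (1+a)(1+b)(1+c)], [t = abc] and [D]
    for the radicand, the polynomial identity
    [P^2 + (1+t) P + 1 - t + t^2 - 3 D
       = 1/2 Σ_cyc ((a-c)(1-b))^2 + 3 (a^2 b + b^2 c + c^2 a - 3abc)]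
    together with cyclic AM-GM gives [3 D <= P^2 + (1+t) P + 1 - t + t^2],
    and the right side, symmetric in [1] and [t], is at most
    [(P + max t 1)^2].  Unboundedness is
    witnessed by [u = (x,1,x)], [w = (1,x^2,1)] with [x] large. *)

From Stdlib Require Import Reals Lra Psatz.
Open Scope R_scope.

Lemma le_div_sqrt N D t : 0 < D -> 0 <= N -> t ^ 2 * D <= N ^ 2 -> t <= N / sqrt D.
Proof.
intros HD HN Hle.
assert (HsD : 0 < sqrt D) by (apply sqrt_lt_R0; exact HD).
destruct (Rle_or_lt t 0) as [Ht | Ht].
{ assert (0 <= N / sqrt D) by (apply Rle_mult_inv_pos; assumption). lra. }
apply (Rmult_le_reg_r (sqrt D)); [exact HsD |].
replace (N / sqrt D * sqrt D) with N by (field; lra).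
rewrite <- (sqrt_pow2 t), <- (sqrt_pow2 N), <- sqrt_mult_alt by nra.
now apply sqrt_le_1_alt.
Qed.

Lemma Kfun_scale l1 l2 l3 u1 u2 u3 w1 w2 w3 :
  0 < l1 -> 0 < l2 -> 0 < l3 ->
  Kfun (l1 * u1) (l2 * u2) (l3 * u3) (l1 * w1) (l2 * w2) (l3 * w3)
  = Kfun u1 u2 u3 w1 w2 w3.
Proof.
intros H1 H2 H3.
set (L := l1 * l2 * l3).
assert (HL : 0 < L) by (unfold L; repeat apply Rmult_lt_0_compat; assumption).
unfold Kfun.
replace (l1 * u1 * (l2 * u2) * (l3 * u3)) with (L * (u1 * u2 * u3)) by (unfold L; ring).
replace (l1 * w1 * (l2 * w2) * (l3 * w3)) with (L * (w1 * w2 * w3)) by (unfold L; ring).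
rewrite RmaxRmult by lra.
match goal with
| |- ?N' / sqrt ?X' = ?N / sqrt ?X =>
    replace N' with (L * N) by (unfold L; ring);
    replace X' with (L ^ 2 * X) by (unfold L; ring)
end.
rewrite sqrt_mult_alt, sqrt_pow2 by nra.
apply Rdiv_mult_l_l; lra.
Qed.

Lemma Kfun_ratio u1 u2 u3 w1 w2 w3 :
  0 < w1 -> 0 < w2 -> 0 < w3 ->
  Kfun u1 u2 u3 w1 w2 w3 = Kfun (u1 / w1) (u2 / w2) (u3 / w3) 1 1 1.
Proof.
intros H1 H2 H3.
rewrite <- (Kfun_scale w1 w2 w3 (u1 / w1) (u2 / w2) (u3 / w3) 1 1 1) by assumption.
f_equal; field; lra.
Qed.

Lemma cyclic_amgm3_min a b c : 0 <= a -> a <= b -> a <= c ->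
  3 * (a * b * c) <= a ^ 2 * b + b ^ 2 * c + c ^ 2 * a.
Proof.
intros Ha Hab Hac.
(* With [b = a + p], [c = a + q] the difference is [a (p^2 - p q + q^2) + p^2 q]. *)
assert (0 <= (b - a) * (c - a)) by (apply Rmult_le_pos; lra).
assert (0 <= a * ((b - a) ^ 2 - (b - a) * (c - a) + (c - a) ^ 2)) by
  (apply Rmult_le_pos; [lra | pose proof (pow2_ge_0 (b - c)); nra]).
assert (0 <= (b - a) ^ 2 * (c - a)) by (apply Rmult_le_pos; nra).
lra.
Qed.

Lemma cyclic_amgm3 a b c : 0 <= a -> 0 <= b -> 0 <= c ->
  3 * (a * b * c) <= a ^ 2 * b + b ^ 2 * c + c ^ 2 * a.
Proof.
intros Ha Hb Hc.
destruct (Rle_dec a b), (Rle_dec b c), (Rle_dec c a).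
all: first
  [ apply cyclic_amgm3_min; lra
  | pose proof (cyclic_amgm3_min b c a ltac:(lra) ltac:(lra) ltac:(lra)); lra
  | pose proof (cyclic_amgm3_min c a b ltac:(lra) ltac:(lra) ltac:(lra)); lra ].
Qed.

Lemma sqr_add_Rmax_ge p x y : 0 <= p -> 0 <= x -> 0 <= y ->
  p ^ 2 + (x + y) * p + (x ^ 2 - x * y + y ^ 2) <= (p + Rmax x y) ^ 2.
Proof.
intros Hp Hx Hy.
unfold Rmax; destruct (Rle_dec x y); nra.
Qed.

Lemma three_radicand_le a b c : 0 <= a -> 0 <= b -> 0 <= c ->
  3 * ((b * c + 1 + b) * (c * a + 1 + c) * (a * b + 1 + a))
  <= ((a + 1) * (b + 1) * (c + 1) + Rmax (a * b * c) 1) ^ 2.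
Proof.
intros Ha Hb Hc.
set (P := (a + 1) * (b + 1) * (c + 1)).
set (t := a * b * c).
assert (HP : 0 <= P) by (unfold P; repeat apply Rmult_le_pos; lra).
assert (Ht : 0 <= t) by (unfold t; repeat apply Rmult_le_pos; lra).
eapply Rle_trans; [| apply sqr_add_Rmax_ge; lra].
pose proof (cyclic_amgm3 a b c Ha Hb Hc).
pose proof (pow2_ge_0 ((a - c) * (1 - b))).
pose proof (pow2_ge_0 ((b - a) * (1 - c))).
pose proof (pow2_ge_0 ((c - b) * (1 - a))).
unfold P, t; lra.
Qed.

Lemma sqrt3_le_Kfun_111 a b c : 0 <= a -> 0 <= b -> 0 <= c ->
  sqrt 3 <= Kfun a b c 1 1 1.
Proof.
intros Ha Hb Hc.
unfold Kfun; rewrite !Rmult_1_r.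
apply le_div_sqrt.
- repeat apply Rmult_lt_0_compat; nra.
- pose proof (Rmax_r (a * b * c) 1).
  assert (0 <= (a + 1) * (b + 1) * (c + 1)) by (repeat apply Rmult_le_pos; lra).
  lra.
- rewrite pow2_sqrt by lra.
  now apply three_radicand_le.
Qed.

Lemma sqrt3_le_Kfun u1 u2 u3 w1 w2 w3 :
  0 < u1 -> 0 < u2 -> 0 < u3 -> 0 < w1 -> 0 < w2 -> 0 < w3 ->
  sqrt 3 <= Kfun u1 u2 u3 w1 w2 w3.
Proof.
intros Hu1 Hu2 Hu3 Hw1 Hw2 Hw3.
rewrite Kfun_ratio by assumption.
apply sqrt3_le_Kfun_111; apply Rlt_le, Rdiv_lt_0_compat; assumption.
Qed.

Lemma Kfun_diag u1 u2 u3 : 0 < u1 -> 0 < u2 -> 0 < u3 ->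
  Kfun u1 u2 u3 u1 u2 u3 = sqrt 3.
Proof.
intros H1 H2 H3.
rewrite <- (Rmult_1_r u1), <- (Rmult_1_r u2), <- (Rmult_1_r u3), Kfun_scale
  by assumption.
unfold Kfun; rewrite Rmax_left by lra.
replace ((1 + 1) * (1 + 1) * (1 + 1) + 1 * 1 * 1) with 9 by ring.
replace ((1 * 1 + 1 * 1 + 1 * 1) * (1 * 1 + 1 * 1 + 1 * 1) * (1 * 1 + 1 * 1 + 1 * 1))
  with (3 ^ 2 * 3) by ring.
rewrite sqrt_mult_alt, sqrt_pow2 by lra.
assert (Hs : sqrt 3 * sqrt 3 = 3) by (apply sqrt_sqrt; lra).
assert (0 < sqrt 3) by (apply sqrt_lt_R0; lra).
replace 9 with (3 * (sqrt 3 * sqrt 3)) by (rewrite Hs; ring).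
field; lra.
Qed.

Lemma Kfun_unbounded M : exists u1 u2 u3 w1 w2 w3 : R,
  0 < u1 /\ 0 < u2 /\ 0 < u3 /\ 0 < w1 /\ 0 < w2 /\ 0 < w3 /\
  M < Kfun u1 u2 u3 w1 w2 w3.
Proof.
set (t := Rmax M 0 + 1).
assert (HMt : M < t) by (unfold t; pose proof (Rmax_l M 0); lra).
assert (Ht : 1 <= t) by (unfold t; pose proof (Rmax_r M 0); lra).
(* For [u = (x,1,x)], [w = (1,x^2,1)] one has [Kfun^2 >= x/27]. *)
set (x := 27 * t ^ 2).
assert (Hx : 1 <= x) by (unfold x; nra).
exists x, 1, x, 1, (x ^ 2), 1.
repeat split; try nra.
apply (Rlt_le_trans _ t); [exact HMt |].
unfold Kfun.
replace ((1 * x + x ^ 2 * 1 + 1 * 1) * (x * x + 1 * 1 + x * 1) * (x * 1 + 1 * x ^ 2 + x * x ^ 2))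
  with (x * (1 + x + x ^ 2) ^ 3) by ring.
set (N := (x + 1) * (1 + x ^ 2) * (x + 1) + Rmax (x * 1 * x) (1 * x ^ 2 * 1)).
assert (HN : x ^ 4 <= N).
{ pose proof (Rmax_r (x * 1 * x) (1 * x ^ 2 * 1)). unfold N; nra. }
assert (Hcube : (1 + x + x ^ 2) ^ 3 <= (3 * x ^ 2) ^ 3).
{ apply pow_incr; nra. }
apply le_div_sqrt.
- apply Rmult_lt_0_compat; [lra | apply pow_lt; nra].
- nra.
- apply (Rle_trans _ ((x / 27) * (x * (3 * x ^ 2) ^ 3))).
  + replace (t ^ 2) with (x / 27) by (unfold x; field).
    apply Rmult_le_compat_l; [lra |].
    apply Rmult_le_compat_l; lra.
  + replace ((x / 27) * (x * (3 * x ^ 2) ^ 3)) with ((x ^ 4) ^ 2) by field.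
    apply pow_incr; nra.
Qed.

Theorem mainTheorem5 :
  (forall u1 u2 u3 w1 w2 w3 : R,
      0 < u1 -> 0 < u2 -> 0 < u3 -> 0 < w1 -> 0 < w2 -> 0 < w3 ->
      sqrt 3 <= Kfun u1 u2 u3 w1 w2 w3)
  /\ (forall u1 u2 u3 : R,
      0 < u1 -> 0 < u2 -> 0 < u3 ->
      Kfun u1 u2 u3 u1 u2 u3 = sqrt 3)
  /\ (forall M : R, exists u1 u2 u3 w1 w2 w3 : R,
      0 < u1 /\ 0 < u2 /\ 0 < u3 /\ 0 < w1 /\ 0 < w2 /\ 0 < w3 /\
      M < Kfun u1 u2 u3 w1 w2 w3).
Proof.
split; [exact sqrt3_le_Kfun | split; [exact Kfun_diag | exact Kfun_unbounded]].
Qed.
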